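(* Let $\lambda>-1/2$, $\lambda\ne0$, $M,N\ge0$ integers, $a_0,\dots,a_M\in\mathbb{R}$, $a_{M+1}=a_{M+2}=0$, and $f_M(x)=\sum_{m=0}^M a_mC^{(\lambda)}_m(x)$. For $0\le n\le N$ and $y\in[-1,1]$ write $$\int_{-1}^{y}f_M(y-1-t)C^{(\lambda)}_n(t)\,\mathrm{d}t=\sum_{k=0}^{M+N+1}R^{(\lambda)}_{k,n}C^{(\lambda)}_k(y),$$ and set $R^{(\lambda)}_{k,-1}:=0$ for all $k$ and $R^{(\lambda)}_{M+N+2,n}:=0$. Then $$R^{(\lambda)}_{k,0}=\begin{cases}0,&k>M+1,\\[1mm] \dfrac{a_{k-1}}{2(k+\lambda-1)}-\dfrac{a_{k+1}}{2(k+\lambda+1)},&1\le k\le M+1,\\[2mm] \displaystyle\sum_{j=1}^{M+1}(-1)^{j+1}\frac{(2\lambda)_j}{j!}R^{(\lambda)}_{j,0},&k=0,\end{cases}$$ and for $0\le n\le N-1$ and $1\le k\le M+N$, $$R^{(\lambda)}_{k,n+1}=S^{(\lambda)}_nR^{(\lambda)}_{k,0}+R^{(\lambda)}_{k,n-1}+\frac{n+\lambda}{k+\lambda-1}R^{(\lambda)}_{k-1,n}-\frac{n+\lambda}{k+\lambda+1}R^{(\lambda)}_{k+1,n},$$ where $S^{(\lambda)}_n=\dfrac{2(-1)^{n+1}(\lambda+n)(2\lambda-1)_n}{(n+1)!}$.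
   Context: Gegenbauer polynomials $C^{(\lambda)}_n$ ($\lambda>-1/2$, $\lambda\ne0$) are defined by $C^{(\lambda)}_{-1}=0$, $C^{(\lambda)}_0=1$, $2(n+\lambda)xC^{(\lambda)}_n(x)=(n+1)C^{(\lambda)}_{n+1}(x)+(n+2\lambda-1)C^{(\lambda)}_{n-1}(x)$. $(a)_n$ is the Pochhammer symbol ($(a)_0=1$). The left-hand convolution is a polynomial of degree at most $M+n+1$, so $R^{(\lambda)}_{k,n}=0$ for $k>M+n+1$; $R^{(\lambda)}$ is the Gegenbauer convolution matrix of $f_M$. *)

From Stdlib Require Import Reals Arith Factorial.
From Coquelicot Require Import Coquelicot.
Open Scope R_scope.

Fixpoint poch (a : R) (n : nat) : R :=
  match n with
  | O => 1
  | S m => poch a m * (a + INR m)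
  end.

(* geg_pair lam n x = (C_{n-1}(x), C_n(x)), from C_{-1} = 0, C_0 = 1 and
   (n+1) C_{n+1} = 2(n+lam) x C_n - (n+2lam-1) C_{n-1}. *)
Fixpoint geg_pair (lam : R) (n : nat) (x : R) : R * R :=
  match n with
  | O => (0, 1)
  | S m => let (p, q) := geg_pair lam m x in
           (q, (2 * (INR m + lam) * x * q - (INR m + 2 * lam - 1) * p) / (INR m + 1))
  end.

Definition gegen (lam : R) (n : nat) (x : R) : R := snd (geg_pair lam n x).

Definition fM (lam : R) (M : nat) (a : nat -> R) (x : R) : R :=
  sum_f_R0 (fun m => a m * gegen lam m x) M.

Definition Scoef (lam : R) (n : nat) : R :=
  2 * (-1) ^ (S n) * (lam + INR n) * poch (2 * lam - 1) n / INR (fact (S n)).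

From Stdlib Require Import Reals Arith Factorial Lra Lia.
From Coquelicot Require Import Coquelicot.
Open Scope R_scope.

(* Since C'_{n+1} - C'_{n-1} = 2 (n + lam) C_n and S_n = C_{n+1}(-1) - C_{n-1}(-1), the function
   C_{n+1} - C_{n-1} - S_n is 2 (n + lam) times the primitive of C_n vanishing at -1.  Write
   I_n = f_M * C_n for the left-hand convolution and F for the primitive of f_M vanishing at -1.
   Then I_0 = F, and integration by parts gives I_{n+1} - I_{n-1} - S_n I_0 = 2 (n + lam) F * C_n,
   where F * C_n is the primitive of I_n = sum_k R_{k,n} C_k vanishing at -1.  Expanding these
   primitives in the Gegenbauer basis with the same identity and comparing coefficients yields
   the formulas; the C_k are linearly independent on [-1, 1] because differentiating a Gegenbauer
   series of degree K multiplies its top coefficient by 2 (K - 1 + lam) <> 0.  Finally R_{0,0}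
   is read off from I_0(-1) = 0. *)

Lemma is_derive_sum_f_R0 (f df : nat -> R -> R) (K : nat) (x : R) :
  (forall k, (k <= K)%nat -> is_derive (f k) x (df k x)) ->
  is_derive (fun y => sum_f_R0 (fun k => f k y) K) x (sum_f_R0 (fun k => df k x) K).
Proof.
  intro Hf.
  pose proof (is_derive_sum_n f K x (fun k => df k x) Hf) as Hsum.
  rewrite sum_n_Reals in Hsum.
  exact (is_derive_ext _ _ x _ (fun y => sum_n_Reals (fun k => f k y) K) Hsum).
Qed.

Lemma sum_f_R0_zero_tail (f : nat -> R) (n p : nat) :
  (forall k, (n < k <= n + p)%nat -> f k = 0) -> sum_f_R0 f (n + p) = sum_f_R0 f n.
Proof.
  induction p as [|p IHp]; intro Hf.
  - now rewrite Nat.add_0_r.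
  - rewrite Nat.add_succ_r, tech5, IHp, Hf; [ring | lia | intros; apply Hf; lia].
Qed.

Lemma continuous_of_is_derive (F f : R -> R) :
  (forall x, is_derive F x (f x)) -> forall x, continuous F x.
Proof.
  intros HF x; apply (ex_derive_continuous (V := R_NormedModule)); eexists; apply HF.
Qed.

Lemma RInt_of_derive (F f : R -> R) (a b : R) :
  (forall x, is_derive F x (f x)) -> (forall x, continuous f x) -> RInt f a b = F b - F a.
Proof.
  intros HF Hf; apply (is_RInt_unique (V := R_CompleteNormedModule)).
  exact (is_RInt_derive F f a b (fun x _ => HF x) (fun x _ => Hf x)).
Qed.

Definition lconv (f g : R -> R) (y : R) : R := RInt (fun t => f (y - 1 - t) * g t) (-1) y.

Lemma continuous_lconv_integrand (u g : R -> R) (y t : R) :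
  (forall x, continuous u x) -> (forall x, continuous g x) ->
  continuous (fun t => u (y - 1 - t) * g t) t.
Proof.
  intros Hu Hg.
  apply (continuous_mult (fun t => u (y - 1 - t)) g); [|apply Hg].
  apply (continuous_comp (fun t => y - 1 - t) u); [|apply Hu].
  apply (continuous_minus (fun _ => y - 1) (fun t => t));
    [apply continuous_const | apply continuous_id].
Qed.

Lemma ex_RInt_lconv (u g : R -> R) (y a b : R) :
  (forall x, continuous u x) -> (forall x, continuous g x) ->
  ex_RInt (fun t => u (y - 1 - t) * g t) a b.
Proof.
  intros Hu Hg; apply (ex_RInt_continuous (V := R_CompleteNormedModule)).
  intros; now apply continuous_lconv_integrand.
Qed.

Lemma lconv_ext (f g1 g2 : R -> R) (y : R) :
  (forall t, g1 t = g2 t) -> lconv f g1 y = lconv f g2 y.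
Proof. intro Hg; unfold lconv; apply RInt_ext; intros; now rewrite Hg. Qed.

Lemma lconv_m1 (f g : R -> R) : lconv f g (-1) = 0.
Proof. exact (RInt_point (V := R_CompleteNormedModule) (-1) _). Qed.

Section Convolution_linear.

Variable f : R -> R.
Hypothesis f_cont : forall x, continuous f x.

Lemma lconv_minus (g1 g2 : R -> R) (y : R) :
  (forall x, continuous g1 x) -> (forall x, continuous g2 x) ->
  lconv f (fun t => g1 t - g2 t) y = lconv f g1 y - lconv f g2 y.
Proof.
  intros Hg1 Hg2; unfold lconv.
  rewrite (RInt_ext _ (fun t => f (y - 1 - t) * g1 t - f (y - 1 - t) * g2 t))
    by (intros; change (?a = ?b) with (@eq R a b); ring).
  exact (RInt_minus _ _ _ _ (ex_RInt_lconv f g1 y _ _ f_cont Hg1)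
                            (ex_RInt_lconv f g2 y _ _ f_cont Hg2)).
Qed.

Lemma lconv_scal (s : R) (g : R -> R) (y : R) :
  (forall x, continuous g x) -> lconv f (fun t => s * g t) y = s * lconv f g y.
Proof.
  intros Hg; unfold lconv.
  rewrite (RInt_ext _ (fun t => s * (f (y - 1 - t) * g t)))
    by (intros; change (?a = ?b) with (@eq R a b); ring).
  exact (RInt_scal _ _ _ s (ex_RInt_lconv f g y _ _ f_cont Hg)).
Qed.

End Convolution_linear.

Section Convolution_primitive.

Variables f F : R -> R.
Hypothesis F_deriv : forall x, is_derive F x (f x).
Hypothesis f_cont : forall x, continuous f x.

Let F_cont : forall x, continuous F x := continuous_of_is_derive F f F_deriv.

Lemma lconv_one y : lconv f (fun _ => 1) y = F y - F (-1).
Proof.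
  unfold lconv; rewrite (RInt_of_derive (fun t => - F (y - 1 - t))).
  - replace (y - 1 - y) with (-1) by ring; replace (y - 1 - -1) with y by ring; ring.
  - intro t; auto_derive; [eexists; apply F_deriv|].
    replace (y - 1 + - t) with (y - 1 - t) by ring.
    rewrite (is_derive_unique (fun x : R => F x) _ _ (F_deriv _)); simpl; ring.
  - intro t; apply continuous_lconv_integrand; [exact f_cont | intro; apply continuous_const].
Qed.

Lemma lconv_by_parts (g G : R -> R) (y : R) :
  (forall x, is_derive G x (g x)) -> (forall x, continuous g x) ->
  F (-1) = 0 -> G (-1) = 0 -> lconv f G y = lconv F g y.
Proof.
  intros HG Hg HF1 HG1.
  pose proof (continuous_of_is_derive G g HG) as G_cont.
  assert (Hparts : @eq R (RInt (fun t => f (y - 1 - t) * G t - F (y - 1 - t) * g t) (-1) y) 0).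
  { rewrite (RInt_of_derive (fun t => - (F (y - 1 - t) * G t))).
    - replace (y - 1 - y) with (-1) by ring; rewrite HF1, HG1; ring.
    - intro t; auto_derive; [repeat split; eexists; eauto |].
      replace (y - 1 + - t) with (y - 1 - t) by ring.
      rewrite (is_derive_unique (fun x : R => F x) _ _ (F_deriv _)),
        (is_derive_unique (fun x : R => G x) _ _ (HG _)); simpl; ring.
    - intro t;
        apply (continuous_minus (fun t => f (y - 1 - t) * G t) (fun t => F (y - 1 - t) * g t));
        apply continuous_lconv_integrand; auto using F_cont. }
  assert (Hminus : @eq R (RInt (fun t => f (y - 1 - t) * G t - F (y - 1 - t) * g t) (-1) y)
                         (lconv f G y - lconv F g y)).
  { exact (RInt_minus _ _ _ _ (ex_RInt_lconv f G y (-1) y f_cont G_cont)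
             (ex_RInt_lconv F g y (-1) y F_cont Hg)). }
  lra.
Qed.

Lemma is_derive_lconv_integrand (g : R -> R) (u t : R) :
  is_derive (fun z => F (z - 1 - t) * g t) u (f (u - 1 - t) * g t).
Proof.
  auto_derive; [eexists; apply F_deriv|].
  replace (u + - (1) + - t) with (u - 1 - t) by ring.
  rewrite (is_derive_unique (fun x : R => F x) _ _ (F_deriv _)); simpl; ring.
Qed.

Lemma continuity_2d_lconv_integrand_deriv (g : R -> R) (u v : R) :
  (forall x, continuous g x) ->
  continuity_2d_pt (fun u v => Derive (fun z => F (z - 1 - v) * g v) u) u v.
Proof.
  intro Hg.
  apply continuity_2d_pt_ext with (fun u v => f (u - 1 - v) * g v).
  { intros; symmetry; apply is_derive_unique, is_derive_lconv_integrand. }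
  apply continuity_2d_pt_mult.
  - apply (continuity_1d_2d_pt_comp f (fun u v => u - 1 - v)).
    + apply continuity_pt_filterlim, f_cont.
    + apply continuity_2d_pt_minus;
        [apply continuity_2d_pt_minus; [apply continuity_2d_pt_id1 | apply continuity_2d_pt_const]
        | apply continuity_2d_pt_id2].
  - apply (continuity_1d_2d_pt_comp g (fun u v => v));
      [apply continuity_pt_filterlim, Hg | apply continuity_2d_pt_id2].
Qed.

Lemma is_derive_lconv (g : R -> R) (y : R) : (forall x, continuous g x) ->
  is_derive (lconv F g) y (lconv f g y + F (-1) * g y).
Proof.
  intro Hg.
  assert (Hint : forall z a b, ex_RInt (fun t => F (z - 1 - t) * g t) a b).
  { intros; apply ex_RInt_lconv; [exact F_cont | exact Hg]. }
  assert (Hpt : forall t, continuity_pt (fun t => F (y - 1 - t) * g t) t).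
  { intro t; apply continuity_pt_filterlim, continuous_lconv_integrand; [exact F_cont | exact Hg]. }
  pose proof (continuity_2d_lconv_integrand_deriv g) as Hcont2.
  pose proof (is_derive_RInt_param_bound_comp (fun z t => F (z - 1 - t) * g t)
     (fun _ => -1) (fun z => z) y 0 1) as Hleibniz; simpl in Hleibniz.
  replace (lconv f g y + F (-1) * g y)
    with (RInt (fun t => Derive (fun u => F (u - 1 - t) * g t) y) (-1) y
          + - (F (y - 1 - -1) * g (-1)) * 0 + F (y - 1 - y) * g y * 1).
  - set (one := mkposreal 1 Rlt_0_1).
    apply Hleibniz.
    + apply filter_forall; intros; apply Hint.
    + exists one; apply filter_forall; intros; apply Hint.
    + exists one; apply filter_forall; intros; apply Hint.
    + exact (is_derive_const (-1) y).
    + exact (is_derive_id y).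
    + exists one; apply filter_forall; intros; eexists; apply is_derive_lconv_integrand.
    + intros; apply Hcont2, Hg.
    + exists one; intros; apply Hcont2, Hg.
    + exists one; intros; apply Hcont2, Hg.
    + apply Hpt.
    + apply Hpt.
  - unfold lconv; rewrite (RInt_ext _ (fun t => f (y - 1 - t) * g t))
      by (intros; apply is_derive_unique, is_derive_lconv_integrand).
    replace (y - 1 - y) with (-1) by ring; ring.
Qed.

Lemma lconv_primitive (g h H : R -> R) (y : R) :
  (forall x, continuous g x) -> F (-1) = 0 ->
  (forall x, is_derive H x (h x)) -> H (-1) = 0 ->
  (forall t, -1 <= t <= 1 -> lconv f g t = h t) ->
  -1 <= y <= 1 -> lconv F g y = H y.
Proof.
  intros Hg HF1 HH HH1 Hfg Hy.
  destruct (Req_dec y (-1)) as [-> | Hy1]; [now rewrite lconv_m1, HH1|].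
  assert (Hconst : lconv F g (-1) - H (-1) = lconv F g y - H y).
  { apply (eq_is_derive (fun z => lconv F g z - H z)); [|lra].
    intros t Ht.
    assert (Hd : is_derive (fun z => lconv F g z - H z) t (lconv f g t + F (-1) * g t - h t)).
    { exact (is_derive_minus (lconv F g) H t _ _ (is_derive_lconv g t Hg) (HH t)). }
    rewrite HF1, Hfg in Hd by lra.
    replace (h t + 0 * g t - h t) with 0 in Hd by ring; exact Hd. }
  rewrite lconv_m1, HH1 in Hconst; lra.
Qed.

End Convolution_primitive.

Lemma INR_S_neq0 n : INR n + 1 <> 0.
Proof. pose proof (pos_INR n); lra. Qed.

Lemma poch_S_shift a n : poch a (S n) = a * poch (a + 1) n.
Proof.
  induction n as [|n IHn].
  - simpl; ring.
  - cbn [poch] in *; rewrite IHn, S_INR; ring.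
Qed.

Section Gegenbauer.

Variable lam : R.

Definition gegen_prev (n : nat) (x : R) : R := fst (geg_pair lam n x).

Lemma gegen_0 x : gegen lam 0 x = 1.
Proof. reflexivity. Qed.

Lemma gegen_prev_0 x : gegen_prev 0 x = 0.
Proof. reflexivity. Qed.

Lemma gegen_prev_S n x : gegen_prev (S n) x = gegen lam n x.
Proof. unfold gegen_prev, gegen; simpl; now destruct (geg_pair lam n x). Qed.

Lemma gegen_S n x : gegen lam (S n) x =
  (2 * (INR n + lam) * x * gegen lam n x - (INR n + 2 * lam - 1) * gegen_prev n x)
  / (INR n + 1).
Proof. unfold gegen_prev, gegen; simpl; now destruct (geg_pair lam n x). Qed.

Lemma gegen_m1 n : gegen lam n (-1) = (-1) ^ n * poch (2 * lam) n / INR (fact n).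
Proof.
  revert n; apply Nat.pair_induction.
  - intros ? ? ->; reflexivity.
  - rewrite gegen_0; simpl; field.
  - rewrite gegen_S, gegen_prev_0, gegen_0; simpl; field.
  - intros n IHn IHSn. rewrite (gegen_S (S n)), gegen_prev_S, IHn, IHSn.
    cbn [poch]; rewrite !fact_simpl, !mult_INR.
    pose proof (INR_fact_neq_0 n); pose proof (INR_S_neq0 n); pose proof (INR_S_neq0 (S n)).
    rewrite !S_INR in *; simpl; field; auto.
Qed.

Fixpoint gegen_der (n : nat) (x : R) : R :=
  match n with
  | O => 0
  | S m => match m with O => 0 | S k => gegen_der k x end
           + 2 * (INR m + lam) * gegen lam m x
  end.

Definition gegen_der_prev (n : nat) (x : R) : R :=
  match n with O => 0 | S k => gegen_der k x end.

Lemma gegen_der_S n x :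
  gegen_der (S n) x = gegen_der_prev n x + 2 * (INR n + lam) * gegen lam n x.
Proof. reflexivity. Qed.

Lemma gegen_der_mulx n x : x * gegen_der n x - gegen_der_prev n x = INR n * gegen lam n x.
Proof.
  revert n; apply Nat.pair_induction.
  - intros ? ? ->; reflexivity.
  - simpl; ring.
  - rewrite gegen_S, gegen_prev_0; simpl; rewrite gegen_0; field.
  - intros n IHn _.
    rewrite (gegen_der_S (S n)), (gegen_S (S n)), gegen_prev_S; cbn [gegen_der_prev].
    rewrite gegen_der_S, Rmult_plus_distr_l.
    replace (x * gegen_der n x) with (INR n * gegen lam n x + gegen_der_prev n x) by lra.
    pose proof (INR_S_neq0 (S n)); rewrite !S_INR in *; field; auto.
Qed.

Lemma is_derive_gegen n x : is_derive (gegen lam n) x (gegen_der n x).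
Proof.
  revert n; apply Nat.pair_induction.
  - intros ? ? ->; reflexivity.
  - exact (is_derive_const 1 x).
  - apply (is_derive_ext (fun t => 2 * lam * t)).
    { intro t; rewrite gegen_S, gegen_0, gegen_prev_0; simpl; field. }
    replace (gegen_der 1 x) with (2 * lam * 1) by (simpl; rewrite gegen_0; ring).
    apply is_derive_scal; exact (is_derive_id x).
  - intros n IHn IHSn.
    pose proof (INR_S_neq0 (S n)) as Hn.
    apply (is_derive_ext (fun t => / (INR (S n) + 1) *
      (2 * (INR (S n) + lam) * (t * gegen lam (S n) t) - (INR (S n) + 2 * lam - 1) * gegen lam n t))).
    { intro t; change (?a = ?b) with (@eq R a b).
      rewrite (gegen_S (S n)), gegen_prev_S; field; exact Hn. }
    auto_derive; [repeat split; eexists; eassumption |].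
    change (?a = ?b) with (@eq R a b).
    change (match n with O => 1 | S _ => INR n + 1 end) with (INR (S n)); rewrite !Rmult_1_l.
    rewrite (is_derive_unique (fun t : R => gegen lam n t) x _ IHn),
      (is_derive_unique (fun t : R => gegen lam (S n) t) x _ IHSn), (gegen_der_S (S n)).
    pose proof (gegen_der_mulx (S n) x) as Heuler; cbn [gegen_der_prev] in *.
    replace (x * gegen_der (S n) x) with (INR (S n) * gegen lam (S n) x + gegen_der n x) by lra.
    rewrite S_INR in *; field; exact Hn.
Qed.

Lemma is_derive_gegen_prev n x : is_derive (gegen_prev n) x (gegen_der_prev n x).
Proof.
  destruct n as [|n].
  - exact (is_derive_const 0 x).
  - apply (is_derive_ext (gegen lam n)), is_derive_gegen.
    intro t; symmetry; apply gegen_prev_S.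
Qed.

Lemma gegen_cont n x : continuous (gegen lam n) x.
Proof. apply (continuous_of_is_derive _ (gegen_der n)), is_derive_gegen. Qed.

Lemma gegen_prev_cont n x : continuous (gegen_prev n) x.
Proof. apply (continuous_of_is_derive _ (gegen_der_prev n)), is_derive_gegen_prev. Qed.

Lemma Scoef_gegen n : Scoef lam n = gegen lam (S n) (-1) - gegen_prev n (-1).
Proof.
  unfold Scoef; destruct n as [|n].
  - rewrite gegen_m1, gegen_prev_0; simpl; field.
  - rewrite gegen_prev_S, !gegen_m1, poch_S_shift.
    replace (2 * lam - 1 + 1) with (2 * lam) by ring.
    cbn [poch]; rewrite !fact_simpl, !mult_INR.
    pose proof (INR_fact_neq_0 n); pose proof (INR_S_neq0 n); pose proof (INR_S_neq0 (S n)).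
    rewrite !S_INR in *; simpl; field; auto.
Qed.

Definition gegen_anti (n : nat) (x : R) : R :=
  gegen lam (S n) x - gegen_prev n x - Scoef lam n.

Lemma lconv_gegen_anti f n y : (forall x, continuous f x) ->
  lconv f (gegen_anti n) y = lconv f (gegen lam (S n)) y - lconv f (gegen_prev n) y
                             - Scoef lam n * lconv f (gegen lam 0) y.
Proof.
  intro Hf.
  assert (Hcont : forall x, continuous (fun t => gegen lam (S n) t - gegen_prev n t) x).
  { intro x; apply (continuous_minus (gegen lam (S n)) (gegen_prev n));
      [apply gegen_cont | apply gegen_prev_cont]. }
  rewrite <- (lconv_minus f Hf (gegen lam (S n))), <- (lconv_scal f Hf), <- lconv_minus;
    auto using gegen_cont, gegen_prev_cont.
  - apply lconv_ext; intro t; unfold gegen_anti; rewrite gegen_0; ring.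
  - intro x; apply (continuous_mult (fun _ => Scoef lam n) (gegen lam 0));
      [apply continuous_const | apply gegen_cont].
Qed.

Lemma gegen_anti_m1 n : gegen_anti n (-1) = 0.
Proof. unfold gegen_anti; rewrite Scoef_gegen; ring. Qed.

Lemma is_derive_gegen_anti n x :
  is_derive (gegen_anti n) x (2 * (INR n + lam) * gegen lam n x).
Proof.
  replace (2 * (INR n + lam) * gegen lam n x)
    with (gegen_der (S n) x - gegen_der_prev n x - 0) by (rewrite gegen_der_S; ring).
  apply (is_derive_minus (fun t => gegen lam (S n) t - gegen_prev n t) (fun _ => Scoef lam n)).
  - apply (is_derive_minus (gegen lam (S n)) (gegen_prev n));
      [apply is_derive_gegen | apply is_derive_gegen_prev].
  - exact (is_derive_const (Scoef lam n) x).
Qed.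

Definition gegen_series (c : nat -> R) (K : nat) (y : R) : R :=
  sum_f_R0 (fun k => c k * gegen lam k y) K.

Lemma is_derive_gegen_series c K y :
  is_derive (gegen_series c K) y (sum_f_R0 (fun k => c k * gegen_der k y) K).
Proof.
  apply (is_derive_sum_f_R0 (fun k y => c k * gegen lam k y) (fun k y => c k * gegen_der k y)).
  intros k _; apply is_derive_scal, is_derive_gegen.
Qed.

Lemma gegen_series_S c K y :
  gegen_series c (S K) y = gegen_series c K y + c (S K) * gegen lam (S K) y.
Proof. reflexivity. Qed.

Lemma gegen_series_S_zero c K y : c (S K) = 0 -> gegen_series c (S K) y = gegen_series c K y.
Proof. intro Hc; rewrite gegen_series_S, Hc; ring. Qed.

Lemma gegen_series_minus c d K y :
  gegen_series (fun k => c k - d k) K y = gegen_series c K y - gegen_series d K y.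
Proof. unfold gegen_series; rewrite <- minus_sum; apply sum_eq; intros; ring. Qed.

Lemma gegen_series_scal v c K y :
  gegen_series (fun k => v * c k) K y = v * gegen_series c K y.
Proof. unfold gegen_series; rewrite scal_sum; apply sum_eq; intros; ring. Qed.

Lemma gegen_series_const v K y :
  gegen_series (fun k => if Nat.eqb k 0 then v else 0) K y = v.
Proof.
  induction K as [|K IHK].
  - unfold gegen_series; simpl; rewrite gegen_0; ring.
  - rewrite gegen_series_S_zero; auto.
Qed.

(* The extra term [e * gegen_der_prev (S K)] makes the induction go through: the recurrence
   [gegen_der_S] moves the top coefficient down two places. *)
Lemma gegen_der_series K : forall c e, exists d,
  (forall y, sum_f_R0 (fun k => c k * gegen_der k y) (S K) + e * gegen_der_prev (S K) y
             = gegen_series d K y)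
  /\ d K = 2 * (INR K + lam) * c (S K).
Proof.
  induction K as [|K IHK]; intros c e.
  - exists (fun _ => 2 * (INR 0 + lam) * c 1%nat); split; [|reflexivity].
    intro y; unfold gegen_series; simpl; rewrite gegen_0; ring.
  - set (c' := fun k => if Nat.eqb k (S K) then c k + e else c k).
    destruct (IHK c' (c (S (S K)))) as [d' [Hd' _]].
    set (top := 2 * (INR (S K) + lam) * c (S (S K))).
    exists (fun j => if Nat.leb j K then d' j else top).
    assert (Htop : (if Nat.leb (S K) K then d' (S K) else top) = top).
    { now rewrite (proj2 (Nat.leb_gt (S K) K) (Nat.lt_succ_diag_r K)). }
    split; [intro y | exact Htop].
    assert (Hlow : gegen_series (fun j => if Nat.leb j K then d' j else top) K y
                   = gegen_series d' K y).
    { apply sum_eq; intros i Hi; now rewrite (proj2 (Nat.leb_le i K) Hi). }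
    assert (Hc' : sum_f_R0 (fun k => c' k * gegen_der k y) (S K)
                  = sum_f_R0 (fun k => c k * gegen_der k y) (S K) + e * gegen_der (S K) y).
    { rewrite !tech5, (sum_eq _ (fun k => c k * gegen_der k y)).
      - unfold c'; rewrite Nat.eqb_refl; ring.
      - intros i Hi; unfold c'; replace (Nat.eqb i (S K)) with false; [ring|].
        symmetry; apply Nat.eqb_neq; lia. }
    rewrite gegen_series_S, Hlow, Htop, <- Hd', Hc', (tech5 _ (S K)), gegen_der_S.
    cbn [gegen_der_prev]; unfold top; ring.
Qed.

Lemma sum_gegen_anti b B y : b (S B) = 0 -> b (S (S B)) = 0 ->
  sum_f_R0 (fun m => b m * gegen_anti m y) B
  = gegen_series (fun k => match k with O => 0 | S j => b j end - b (S k)) (S B) y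
    - sum_f_R0 (fun m => b m * Scoef lam m) B.
Proof.
  intros Hb1 Hb2.
  assert (Hup : gegen_series (fun k => match k with O => 0 | S j => b j end) (S B) y
                = sum_f_R0 (fun m => b m * gegen lam (S m) y) B).
  { unfold gegen_series; rewrite decomp_sum by lia; simpl pred; ring. }
  assert (Hdown : gegen_series (fun k => b (S k)) (S B) y
                  = sum_f_R0 (fun m => b m * gegen_prev m y) B).
  { rewrite <- (sum_f_R0_zero_tail _ B 2).
    - rewrite decomp_sum by lia; simpl pred; rewrite gegen_prev_0, Rmult_0_r, Rplus_0_l.
      replace (B + 2)%nat with (S (S B)) by lia.
      apply sum_eq; intros; now rewrite gegen_prev_S.
    - intros k Hk; assert (k = S B \/ k = S (S B)) as [-> | ->] by lia;
        [rewrite Hb1 | rewrite Hb2]; ring. }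
  rewrite gegen_series_minus, Hup, Hdown, <- !minus_sum.
  apply sum_eq; intros; unfold gegen_anti; ring.
Qed.

Hypothesis Hlam_shift : forall k : nat, INR k + lam <> 0.

Lemma gegen_series_top_coef K : forall c,
  (forall y, -1 < y < 1 -> gegen_series c K y = 0) -> c K = 0.
Proof.
  induction K as [|K IHK]; intros c Hc.
  - specialize (Hc 0 ltac:(lra)); unfold gegen_series in Hc; simpl in Hc.
    rewrite gegen_0 in Hc; lra.
  - destruct (gegen_der_series K c 0) as [d [Hd Htop]].
    assert (Hd0 : d K = 0).
    { apply IHK; intros y Hy; rewrite <- Hd, Rmult_0_l, Rplus_0_r.
      assert (Hder : is_derive (fun _ : R => 0) y
                       (sum_f_R0 (fun k => c k * gegen_der k y) (S K))).
      { apply (is_derive_ext_loc (gegen_series c (S K))); [|apply is_derive_gegen_series].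
        apply (locally_interval _ y (-1) 1); simpl; try lra.
        intros t Ht1 Ht2; apply Hc; lra. }
      rewrite <- (is_derive_unique _ _ _ Hder); apply Derive_const. }
    rewrite Htop in Hd0; pose proof (Hlam_shift K).
    apply Rmult_integral in Hd0; destruct Hd0; [lra | assumption].
Qed.

Lemma gegen_series_eq0 K : forall c,
  (forall y, -1 <= y <= 1 -> gegen_series c K y = 0) -> forall k, (k <= K)%nat -> c k = 0.
Proof.
  induction K as [|K IHK]; intros c Hc k Hk.
  - replace k with 0%nat by lia; apply (gegen_series_top_coef 0); intros; apply Hc; lra.
  - assert (Htop : c (S K) = 0) by (apply gegen_series_top_coef; intros; apply Hc; lra).
    destruct (Nat.eq_dec k (S K)) as [-> | Hne]; [exact Htop|].
    apply IHK; [|lia].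
    intros y Hy; rewrite <- (gegen_series_S_zero c K y Htop); now apply Hc.
Qed.

Definition gegen_series_prim (c : nat -> R) (K : nat) (y : R) : R :=
  sum_f_R0 (fun m => c m / (2 * (INR m + lam)) * gegen_anti m y) K.

Lemma gegen_series_prim_m1 c K : gegen_series_prim c K (-1) = 0.
Proof.
  unfold gegen_series_prim; induction K as [|K IHK]; simpl; rewrite ?IHK, gegen_anti_m1; ring.
Qed.

Lemma is_derive_gegen_series_prim c K y :
  is_derive (gegen_series_prim c K) y (gegen_series c K y).
Proof.
  unfold gegen_series_prim, gegen_series.
  apply (is_derive_sum_f_R0 (fun m y => c m / (2 * (INR m + lam)) * gegen_anti m y)
                            (fun k y => c k * gegen lam k y)).
  intros k _.
  replace (c k * gegen lam k y)
    with (c k / (2 * (INR k + lam)) * (2 * (INR k + lam) * gegen lam k y))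
    by (field; apply Hlam_shift).
  apply is_derive_scal, is_derive_gegen_anti.
Qed.

Lemma gegen_series_prim_scal s c K y :
  gegen_series_prim (fun m => s * c m) K y = s * gegen_series_prim c K y.
Proof.
  unfold gegen_series_prim; rewrite scal_sum; apply sum_eq; intros; field; apply Hlam_shift.
Qed.

Lemma gegen_series_prim_coef B c d v :
  (forall m, (B < m)%nat -> c m = 0) ->
  (forall y, -1 <= y <= 1 -> gegen_series d (S B) y = gegen_series_prim c B y + v) ->
  forall k, (1 <= k <= S B)%nat ->
  d k = c (k - 1)%nat / (2 * (INR k + lam - 1)) - c (k + 1)%nat / (2 * (INR k + lam + 1)).
Proof.
  intros Hc Hd k Hk.
  set (b := fun m => c m / (2 * (INR m + lam))).
  set (e := fun k => match k with O => 0 | S j => b j end - b (S k)).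
  set (s := sum_f_R0 (fun m => b m * Scoef lam m) B).
  assert (Hb : forall m, (B < m)%nat -> b m = 0)
    by (intros m Hm; unfold b; rewrite Hc; [field|]; auto).
  assert (Hdiff : forall y, -1 <= y <= 1 ->
    gegen_series (fun k => d k - e k - (if Nat.eqb k 0 then v - s else 0)) (S B) y = 0).
  { intros y Hy.
    rewrite !gegen_series_minus, gegen_series_const, Hd by exact Hy.
    change (gegen_series_prim c B y) with (sum_f_R0 (fun m => b m * gegen_anti m y) B).
    rewrite sum_gegen_anti by (apply Hb; lia).
    unfold s, e; ring. }
  destruct k as [|j]; [lia|].
  pose proof (gegen_series_eq0 _ _ Hdiff (S j) (proj2 Hk)) as Hj; simpl in Hj.
  replace (S j - 1)%nat with j by lia; replace (S j + 1)%nat with (S (S j)) by lia.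
  replace (INR (S j) + lam - 1) with (INR j + lam) by (rewrite S_INR; ring).
  replace (INR (S j) + lam + 1) with (INR (S (S j)) + lam) by (rewrite !S_INR; ring).
  unfold e, b in Hj; lra.
Qed.

End Gegenbauer.

Section Convolution_matrix.

Variables (lam : R) (M N : nat) (a : nat -> R) (Rc : nat -> nat -> R).
Hypotheses (Hlam : -1/2 < lam) (Hlam0 : lam <> 0).
Hypotheses (Ha1 : a (S M) = 0) (Ha2 : a (S (S M)) = 0).
Hypothesis Hexp : forall n : nat, (n <= N)%nat -> forall y : R, -1 <= y <= 1 ->
  RInt (fun t => fM lam M a (y - 1 - t) * gegen lam n t) (-1) y
  = sum_f_R0 (fun k => Rc k n * gegen lam k y) (M + N + 1).
Hypothesis Hzero : forall n k : nat, (n <= N)%nat -> (M + N + 1 < k)%nat -> Rc k n = 0.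

Lemma shifted_lam_neq0 k : INR k + lam <> 0.
Proof. destruct k; [simpl; lra | rewrite S_INR; pose proof (pos_INR k); lra]. Qed.

(* [fM] only uses [a] up to [M]; truncating [a] there makes the coefficients of [fM_prim]
   vanish beyond [M + N + 1], as [gegen_series_prim_coef] requires. *)
Definition a_trunc (m : nat) : R := if Nat.leb m M then a m else 0.

Lemma a_trunc_eq m : (m <= S (S M))%nat -> a_trunc m = a m.
Proof.
  intro Hm; unfold a_trunc; destruct (Nat.leb_spec m M); [reflexivity|].
  now assert (m = S M \/ m = S (S M)) as [-> | ->] by lia.
Qed.

Definition fM_prim : R -> R := gegen_series_prim lam a_trunc (M + N + 1).

Lemma fM_cont x : continuous (fM lam M a) x.
Proof.
  apply (ex_derive_continuous (V := R_NormedModule)); eexists.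
  apply (is_derive_gegen_series lam a M).
Qed.

Lemma fM_prim_deriv x : is_derive fM_prim x (fM lam M a x).
Proof.
  replace (fM lam M a x) with (gegen_series lam a_trunc (M + N + 1) x).
  - apply is_derive_gegen_series_prim, shifted_lam_neq0.
  - unfold gegen_series; replace (M + N + 1)%nat with (M + S N)%nat by lia.
    rewrite sum_f_R0_zero_tail.
    + apply sum_eq; intros m Hm; unfold a_trunc; now rewrite (proj2 (Nat.leb_le m M)).
    + intros m Hm; unfold a_trunc; rewrite (proj2 (Nat.leb_gt m M)) by lia; ring.
Qed.

Lemma fM_prim_m1 : fM_prim (-1) = 0.
Proof. apply gegen_series_prim_m1. Qed.

Lemma lconv_fM_gegen n y : (n <= N)%nat -> -1 <= y <= 1 ->
  lconv (fM lam M a) (gegen lam n) y = gegen_series lam (fun k => Rc k n) (S (M + N + 1)) y.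
Proof.
  intros Hn Hy; rewrite gegen_series_S_zero by (apply Hzero; lia).
  exact (Hexp n Hn y Hy).
Qed.

Lemma lconv_fM_prim_gegen n y : (n <= N)%nat -> -1 <= y <= 1 ->
  lconv fM_prim (gegen lam n) y = gegen_series_prim lam (fun k => Rc k n) (M + N + 1) y.
Proof.
  intros Hn Hy.
  apply (lconv_primitive (fM lam M a) fM_prim fM_prim_deriv fM_cont _
           (gegen_series lam (fun k => Rc k n) (M + N + 1)));
    auto using gegen_cont, fM_prim_m1, gegen_series_prim_m1.
  - intro x; apply is_derive_gegen_series_prim, shifted_lam_neq0.
  - intros t Ht; exact (Hexp n Hn t Ht).
Qed.

Lemma lconv_fM_gegen_anti n y : (n <= N)%nat -> -1 <= y <= 1 ->
  lconv (fM lam M a) (gegen_anti lam n) y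
  = gegen_series_prim lam (fun k => 2 * (INR n + lam) * Rc k n) (M + N + 1) y.
Proof.
  intros Hn Hy.
  assert (Hg : forall x, continuous (fun t => 2 * (INR n + lam) * gegen lam n t) x).
  { intro x; apply (continuous_mult (fun _ => 2 * (INR n + lam)) (gegen lam n));
      [apply continuous_const | apply gegen_cont]. }
  rewrite (lconv_by_parts (fM lam M a) fM_prim fM_prim_deriv fM_cont
             (fun t => 2 * (INR n + lam) * gegen lam n t) (gegen_anti lam n))
    by auto using is_derive_gegen_anti, fM_prim_m1, gegen_anti_m1.
  rewrite (lconv_scal fM_prim (continuous_of_is_derive _ _ fM_prim_deriv)) by apply gegen_cont.
  rewrite lconv_fM_prim_gegen, gegen_series_prim_scal by auto using shifted_lam_neq0.
  reflexivity.
Qed.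

Lemma Rc_col0_trunc k : (1 <= k <= S (M + N + 1))%nat ->
  Rc k 0 = a_trunc (k - 1) / (2 * (INR k + lam - 1)) - a_trunc (k + 1) / (2 * (INR k + lam + 1)).
Proof.
  apply (gegen_series_prim_coef lam shifted_lam_neq0 (M + N + 1) a_trunc (fun k => Rc k 0) 0).
  - intros m Hm; unfold a_trunc; rewrite (proj2 (Nat.leb_gt m M)) by lia; reflexivity.
  - intros y Hy; rewrite <- lconv_fM_gegen by (lia || assumption).
    change (gegen lam 0) with (fun _ : R => 1).
    rewrite (lconv_one _ _ fM_prim_deriv fM_cont), fM_prim_m1; unfold fM_prim; ring.
Qed.

Lemma Rc_col0_vanish k : (M + 1 < k)%nat -> Rc k 0 = 0.
Proof.
  intro Hk; destruct (Nat.leb_spec k (M + N + 1)) as [HkB | HkB]; [|apply Hzero; lia].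
  rewrite Rc_col0_trunc by lia; unfold a_trunc.
  rewrite !(proj2 (Nat.leb_gt _ M)) by lia; unfold Rdiv; ring.
Qed.

Lemma Rc_col0 k : (1 <= k <= M + 1)%nat ->
  Rc k 0 = a (k - 1) / (2 * (INR k + lam - 1)) - a (k + 1) / (2 * (INR k + lam + 1)).
Proof. intro Hk; rewrite Rc_col0_trunc, !a_trunc_eq by lia; reflexivity. Qed.

Lemma Rc00 : Rc 0 0 = sum_f_R0 (fun i => let j := S i in
  (-1) ^ (S j) * poch (2 * lam) j / INR (fact j) * Rc j 0) M.
Proof.
  pose proof (Hexp 0 (Nat.le_0_l N) (-1) ltac:(lra)) as Hm1.
  change (lconv (fM lam M a) (gegen lam 0) (-1)
          = gegen_series lam (fun k => Rc k 0) (M + N + 1) (-1)) in Hm1.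
  rewrite lconv_m1 in Hm1; unfold gegen_series in Hm1.
  replace (M + N + 1)%nat with (S M + N)%nat in Hm1 by lia.
  rewrite sum_f_R0_zero_tail, decomp_sum in Hm1 by
    (lia || (intros k Hk; rewrite Rc_col0_vanish by lia; ring)).
  simpl pred in Hm1; rewrite gegen_0 in Hm1.
  assert (Hsum : sum_f_R0 (fun i => let j := S i in
                   (-1) ^ (S j) * poch (2 * lam) j / INR (fact j) * Rc j 0) M
                 + sum_f_R0 (fun i => Rc (S i) 0 * gegen lam (S i) (-1)) M = 0).
  { rewrite <- plus_sum, <- (Rmult_0_l (INR (S M))), <- sum_cte.
    apply sum_eq; intros i _; cbv zeta; rewrite gegen_m1; simpl pow; unfold Rdiv; ring. }
  lra.
Qed.

Lemma lconv_fM_gegen_prev n y : (n <= N)%nat -> -1 <= y <= 1 ->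
  lconv (fM lam M a) (gegen_prev lam n) y
  = gegen_series lam (fun k => match n with O => 0 | S m => Rc k m end) (S (M + N + 1)) y.
Proof.
  intros Hn Hy; destruct n as [|m].
  - rewrite (lconv_ext _ _ (fun t => 0 * gegen lam 0 t)) by (intro; rewrite gegen_prev_0; ring).
    rewrite (lconv_scal _ fM_cont) by apply gegen_cont.
    rewrite lconv_fM_gegen, <- gegen_series_scal by (lia || assumption).
    apply sum_eq; intros; ring.
  - rewrite (lconv_ext _ _ (gegen lam m)) by apply gegen_prev_S.
    apply lconv_fM_gegen; [lia | assumption].
Qed.

Lemma Rc_rec n k : (n + 1 <= N)%nat -> (1 <= k <= M + N)%nat ->
  Rc k (S n) = Scoef lam n * Rc k O
               + (match n with O => 0 | S m => Rc k m end)
               + (INR n + lam) / (INR k + lam - 1) * Rc (k - 1)%nat n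
               - (INR n + lam) / (INR k + lam + 1) * Rc (k + 1)%nat n.
Proof.
  intros Hn Hk.
  set (Rprev := fun k => match n with O => 0 | S m => Rc k m end).
  assert (Hseries : forall y, -1 <= y <= 1 ->
    gegen_series lam (fun k => Rc k (S n) - Rprev k - Scoef lam n * Rc k 0) (S (M + N + 1)) y
    = gegen_series_prim lam (fun k => 2 * (INR n + lam) * Rc k n) (M + N + 1) y + 0).
  { intros y Hy; unfold Rprev.
    rewrite !gegen_series_minus, gegen_series_scal, <- (lconv_fM_gegen (S n)),
      <- (lconv_fM_gegen 0), <- lconv_fM_gegen_prev by (lia || assumption).
    rewrite <- (lconv_gegen_anti _ _ _ _ fM_cont), lconv_fM_gegen_anti by (lia || assumption).
    ring. }
  assert (Hsupp : forall m, (M + N + 1 < m)%nat -> 2 * (INR n + lam) * Rc m n = 0).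
  { intros m Hm; rewrite Hzero by lia; ring. }
  pose proof (gegen_series_prim_coef lam shifted_lam_neq0 (M + N + 1) _ _ 0 Hsupp Hseries k
                ltac:(lia)) as Hk'.
  cbv beta in Hk'; fold (Rprev k).
  assert (Hkm : INR k + lam - 1 <> 0).
  { replace (INR k + lam - 1) with (INR (k - 1) + lam) by (rewrite minus_INR by lia; simpl; ring).
    apply shifted_lam_neq0. }
  assert (Hkp : INR k + lam + 1 <> 0).
  { replace (INR k + lam + 1) with (INR (k + 1) + lam) by (rewrite plus_INR; simpl; ring).
    apply shifted_lam_neq0. }
  replace (Rc k (S n)) with ((Rc k (S n) - Rprev k - Scoef lam n * Rc k 0)
                              + Rprev k + Scoef lam n * Rc k 0) by ring.
  rewrite Hk'; field; auto.
Qed.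

End Convolution_matrix.

(* [Rc k n] is R^{(lam)}_{k,n}; the convention R_{k,-1} = 0 is the [match n] below. *)
Theorem theorem4p3 (lam : R) (M N : nat) (a : nat -> R) (Rc : nat -> nat -> R)
  (Hlam : -1/2 < lam) (Hlam0 : lam <> 0)
  (Ha1 : a (S M) = 0) (Ha2 : a (S (S M)) = 0)
  (Hexp : forall n : nat, (n <= N)%nat -> forall y : R, -1 <= y <= 1 ->
     RInt (fun t => fM lam M a (y - 1 - t) * gegen lam n t) (-1) y
     = sum_f_R0 (fun k => Rc k n * gegen lam k y) (M + N + 1))
  (Hzero : forall n k : nat, (n <= N)%nat -> (M + N + 1 < k)%nat -> Rc k n = 0) :
  (forall k : nat, (M + 1 < k)%nat -> Rc k O = 0)
  /\ (forall k : nat, (1 <= k <= M + 1)%nat ->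
        Rc k O = a (k - 1)%nat / (2 * (INR k + lam - 1))
                 - a (k + 1)%nat / (2 * (INR k + lam + 1)))
  /\ Rc O O = sum_f_R0 (fun i => let j := S i in
                 (-1) ^ (S j) * poch (2 * lam) j / INR (fact j) * Rc j O) M
  /\ (forall n k : nat, (n + 1 <= N)%nat -> (1 <= k <= M + N)%nat ->
        Rc k (S n) = Scoef lam n * Rc k O
                     + (match n with O => 0 | S m => Rc k m end)
                     + (INR n + lam) / (INR k + lam - 1) * Rc (k - 1)%nat n
                     - (INR n + lam) / (INR k + lam + 1) * Rc (k + 1)%nat n).
Proof.
  split; [|split; [|split]];
    [eapply Rc_col0_vanish | eapply Rc_col0 | eapply Rc00 | eapply Rc_rec]; eassumption.
Qed.
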